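(* Let $q\ge 2$, $n\ge 1$, $h\in F(n,q)$ and $k=\kappa^{\min}(h)$. Then $\Omega(h)+k\le \mathcal{L}^*(h)$.
   Context: Let $q\ge 2$, $A=\{0,1,\dots,q-1\}$, $[n]=\{1,\dots,n\}$, and let $F(n,q)$ be the set of all maps $A^n\to A^n$. For $f\in F(m,q)$ and $i\in[m]$, $f_i$ is the $i$-th coordinate function and $f^i(x)=(x_1,\dots,x_{i-1},f_i(x),x_{i+1},\dots,x_m)$; for a word $w=(w_1,\dots,w_t)$ over $[m]$, $f^w=f^{w_t}\circ\cdots\circ f^{w_1}$. $\Pi([m])$ is the set of permutations of $[m]$ written as words $(w_1,\dots,w_m)$. $\mathrm{pr}_{[n]}:A^m\to A^n$ is the projection onto the first $n$ coordinates. For $m\ge n$, $(f,w)$ with $f\in F(m,q)$, $w\in\Pi([m])$ sequentializes $h\in F(n,q)$ if $\mathrm{pr}_{[n]}\circ f^w=h\circ\mathrm{pr}_{[n]}$. $\kappa^{\min}(h)$ is the smallest $k\ge 0$ such that there exist $f\in F(n+k,q)$ and $w\in\Pi([n+k])$ with $(f,w)$ sequentializing $h$. A coordinate function $h_i$ is trivial if $h_i(x)=x_i$ for all $x$; $\Omega(h)$ is the number of $i\in[n]$ such that $h_i$ is not trivial. $F^*(m,q)$ is the set of $g\in F(m,q)$ that update at most one coordinate, i.e. there is $i\in[m]$ with $g_j(x)=x_j$ for all $j\ne i$ and all $x\in A^m$. For $m\ge n$, $\mathcal{L}(h\,|\,m)$ is the smallest $t\ge 0$ such that there exist $g^{(1)},\dots,g^{(t)}\in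 F^*(m,q)$ with $\mathrm{pr}_{[n]}\circ g^{(t)}\circ\cdots\circ g^{(1)}=h\circ\mathrm{pr}_{[n]}$, and $\mathcal{L}^*(h)=\min\{\mathcal{L}(h\,|\,m): m\ge n\}$. *)

From mathcomp Require Import all_boot.
From Stdlib Require Lists.List.
Set Implicit Arguments. Unset Strict Implicit. Unset Printing Implicit Defensive.

(* A = {0,...,q-1} is 'I_q; coordinates [m] = {1..m} are 'I_m (0-based);
   a point of A^m is a finite function 'I_m -> 'I_q. *)
Definition vec (q m : nat) := {ffun 'I_m -> 'I_q}.

Definition Fmap (m q : nat) := vec q m -> vec q m.

Definition upd (q m : nat) (f : Fmap m q) (i : 'I_m) (x : vec q m) : vec q m :=
  [ffun j => if j == i then f x i else x j].

(* f^w = f^{w_t} o ... o f^{w_1} : apply w_1 first *)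
Definition seqf (q m : nat) (f : Fmap m q) (w : seq 'I_m) (x : vec q m) : vec q m :=
  foldl (fun y i => upd f i y) x w.

Definition is_perm_word (m : nat) (w : seq 'I_m) : bool := perm_eq w (enum 'I_m).

Definition pr (q n k : nat) (x : vec q (n + k)) : vec q n :=
  [ffun i => x (lshift k i)].

Definition sequentializes (q n k : nat) (f : Fmap (n + k) q) (w : seq 'I_(n + k))
  (h : Fmap n q) : Prop :=
  is_perm_word w /\ forall x : vec q (n + k), pr (seqf f w x) = h (pr x).

Definition seq_possible (q n : nat) (h : Fmap n q) (k : nat) : Prop :=
  exists (f : Fmap (n + k) q) (w : seq 'I_(n + k)), sequentializes f w h.

Definition is_kappa_min (q n : nat) (h : Fmap n q) (k : nat) : Prop :=
  seq_possible h k /\ forall k', seq_possible h k' -> k <= k'.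

Definition trivial_coord (q n : nat) (h : Fmap n q) (i : 'I_n) : bool :=
  [forall x : vec q n, h x i == x i].

Definition Omega (q n : nat) (h : Fmap n q) : nat :=
  #|[pred i : 'I_n | ~~ trivial_coord h i]|.

Definition single_update (q m : nat) (g : Fmap m q) : Prop :=
  exists i : 'I_m, forall (j : 'I_m) (x : vec q m), j != i -> g x j = x j.

(* g^(t) o ... o g^(1) applied to x, with gs = [:: g^(1); ...; g^(t)] *)
Definition compose_list (q m : nat) (gs : seq (Fmap m q)) (x : vec q m) : vec q m :=
  foldl (fun y g => g y) x gs.

Definition L_realizes (q n : nat) (h : Fmap n q) (k t : nat) : Prop :=
  exists gs : seq (Fmap (n + k) q),
    size gs = t /\ (forall g, Stdlib.Lists.List.In g gs -> single_update g) /\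
    forall x : vec q (n + k), pr (compose_list gs x) = h (pr x).

Definition is_L (q n : nat) (h : Fmap n q) (k t : nat) : Prop :=
  L_realizes h k t /\ forall t', L_realizes h k t' -> t <= t'.

(* t = L^*(h) = min over m >= n (m = n+k) of L(h|m) *)
Definition is_Lstar (q n : nat) (h : Fmap n q) (t : nat) : Prop :=
  (exists k, is_L h k t) /\ forall k t', is_L h k t' -> t <= t'.

From mathcomp Require Import all_boot.
Set Implicit Arguments. Unset Strict Implicit. Unset Printing Implicit Defensive.

(* Write a realization of h by t single-coordinate updates on n + k
   registers as a straight-line program, and call a step final when it is
   the last write to an output coordinate.  Every nontrivial coordinate of h
   is written, hence has a final step, so Omega(h) <= #final.  Conversely the
   program can be sequentialized with one auxiliary register per non-final
   step: final steps keep their output coordinate, each other step writes a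
   fresh register, and a step reads every old register from the new register
   holding its most recent write.  As no new register is written twice,
   updating them in step order replays the program, whence
   kappa_min(h) <= t - #final. *)

Lemma card_ord_count t (P : pred nat) :
  #|[pred j : 'I_t | P j]| = count P (iota 0 t).
Proof.
by rewrite -sum1_card -(big_mkord P (fun=> 1)) sum1_count /index_iota subn0.
Qed.

Lemma exists_last_index (P : pred nat) t :
  (exists2 j, j < t & P j) ->
  exists j, [/\ j < t, P j & forall j', j < j' < t -> ~~ P j'].
Proof.
move=> [j jt Pj].
have exP : exists j, (j < t) && P j by exists j; rewrite jt.
have ubP j' : (j' < t) && P j' -> j' <= t by case/andP => /ltnW.
case: (ex_maxnP exP ubP) => jl /andP [jlt Pjl] jl_max.
exists jl; split => // j' /andP [lt j't]; apply/negP => Pj'.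
by move: (jl_max j'); rewrite j't Pj' leqNgt lt => /(_ isT).
Qed.

Lemma split_lshift m k (i : 'I_m) : split (lshift k i) = inl i.
Proof. exact: (unsplitK (inl i)). Qed.

Lemma seqf_rcons q m (f : Fmap m q) w c x :
  seqf f (rcons w c) x = upd f c (seqf f w x).
Proof. exact: foldl_rcons. Qed.

Lemma seqf_cat q m (f : Fmap m q) w1 w2 x :
  seqf f (w1 ++ w2) x = seqf f w2 (seqf f w1 x).
Proof. exact: foldl_cat. Qed.

Section Programs.
Variables q m : nat.

(* A single-coordinate update, i.e. an element of F^*(m,q), as a pair
   (coordinate, new value). *)
Definition instr := ('I_m * (vec q m -> 'I_q))%type.

Definition exec (x : vec q m) (p : instr) : vec q m :=
  [ffun c => if c == p.1 then p.2 x else x c].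

Definition run (x : vec q m) (ps : seq instr) : vec q m := foldl exec x ps.

Lemma compose_list_run (gs : seq (Fmap m q)) :
  (forall g, Stdlib.Lists.List.In g gs -> single_update g) ->
  exists ps, size ps = size gs /\ forall x, compose_list gs x = run x ps.
Proof.
elim: gs => [|g gs IH] single; first by exists [::].
have [i gi] := single g (or_introl erefl).
have [ps [size_ps run_gs]] := IH (fun g' gs_g' => single g' (or_intror gs_g')).
exists ((i, fun x => g x i) :: ps); split; first by rewrite /= size_ps.
move=> x; rewrite /run /= -/(run _ ps) -run_gs; congr compose_list.
by apply/ffunP => c; rewrite ffunE /=; case: eqVneq => [->|/gi ->].
Qed.

Lemma run_rcons x ps p : run x (rcons ps p) = exec (run x ps) p.
Proof. exact: foldl_rcons. Qed.

Lemma run_unwritten x ps r :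
  all (fun p : instr => p.1 != r) ps -> run x ps r = x r.
Proof.
elim: ps x => [//|p ps IH] x /= /andP [p_neq /IH ->].
by rewrite ffunE eq_sym (negbTE p_neq).
Qed.

End Programs.

Definition ext_input q n k (c : 'I_q) (x : vec q n) : vec q (n + k) :=
  [ffun r => if split r is inl i then x i else c].

Lemma pr_ext_input q n k c (x : vec q n) : pr (ext_input k c x) = x.
Proof. by apply/ffunP => i; rewrite !ffunE split_lshift. Qed.

Lemma written_of_nontrivial q n k (h : Fmap n q) (ps : seq (instr q (n + k)))
    (i : 'I_n) :
  (forall x, pr (run x ps) = h (pr x)) -> ~~ trivial_coord h i ->
  has (fun p : instr q (n + k) => p.1 == lshift k i) ps.
Proof.
move=> run_h; apply: contraR; rewrite -all_predC => unwritten.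
apply/forallP => x; apply/eqP.
rewrite -(pr_ext_input k (x i) x) -run_h ffunE run_unwritten //.
by rewrite [RHS]ffunE.
Qed.

Section Sequentialization.
Variables (q n k : nat) (c0 : 'I_q) (i0 : 'I_n).
Variable ps : seq (instr q (n + k)).

Let t := size ps.
Let dflt : instr q (n + k) := (lshift k i0, fun=> c0).
Let reg j : 'I_(n + k) := (nth dflt ps j).1.
Let fn j := (nth dflt ps j).2.

Let final j :=
  (reg j < n) && [forall j' : 'I_t, (j < j') ==> (reg j' != reg j)].
Let fresh p := count (predC final) (iota 0 p).
Let k' := fresh t.
Let target j := if final j then val (reg j) else n + fresh j.
Let rho j : 'I_(n + k') := insubd (lshift k' i0) (target j).

Lemma freshS j : fresh j.+1 = fresh j + ~~ final j.
Proof. by rewrite /fresh -addn1 iotaD count_cat /= addn0. Qed.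

Lemma fresh_mono j p : j <= p -> fresh j <= fresh p.
Proof. by move=> le; rewrite /fresh -(subnKC le) iotaD count_cat leq_addr. Qed.

Lemma target_lt j : j < t -> target j < n + k'.
Proof.
move=> jt; rewrite /target; case: ifP => [/andP [lt _]|not_final].
  exact: leq_trans lt (leq_addr _ _).
rewrite ltn_add2l; apply: leq_trans (fresh_mono jt).
by rewrite freshS not_final addn1.
Qed.

Lemma val_rho j : j < t -> val (rho j) = target j.
Proof. by move=> jt; rewrite val_insubd target_lt. Qed.

Lemma target_inj j j' : j < t -> j' < t -> target j = target j' -> j = j'.
Proof.
wlog lt : j j' / j < j'.
  move=> W jt j't e; case: (ltngtP j j') => // lt; first exact: W.
  exact/esym/W.
move=> jt j't; rewrite /target.
case: ifP => [/andP [lt_n /forallP later]|not_final];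
  case: ifP => [/andP [lt_n' _]|not_final'].
- move=> /val_inj reg_eq; have := later (Ordinal j't).
  by rewrite /= lt reg_eq eqxx.
- by move=> e; move: lt_n; rewrite e ltnNge leq_addr.
- by move=> e; move: lt_n'; rewrite -e ltnNge leq_addr.
- move=> /addnI e; have := fresh_mono lt.
  by rewrite freshS not_final addn1 e ltnn.
Qed.

Lemma rho_inj j j' : j < t -> j' < t -> rho j = rho j' -> j = j'.
Proof. by move=> jt j't e; apply: target_inj => //; rewrite -!val_rho // e. Qed.

(* The register of the new program holding the current content of the old
   register r after p steps; [None] for an auxiliary register not yet
   written, whose initial content is irrelevant. *)
Fixpoint loc p (r : 'I_(n + k)) : option 'I_(n + k') :=
  if p is p'.+1 then (if r == reg p' then Some (rho p') else loc p' r)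
  else if split r is inl i then Some (lshift k' i) else None.

Lemma loc_cases p r c : loc p r = Some c ->
  (exists2 j, j < p & c = rho j) \/ (r < n /\ val c = val r).
Proof.
elim: p c => [|p IH] c /=.
  by case: splitP => // i r_eq [<-]; right; rewrite r_eq.
case: eqP => [_ [<-]|_ /IH [[j jp ->]|]]; [by left; exists p| |by right].
by left; exists j => //; exact: ltnW.
Qed.

Lemma loc_neq_rho p r : p < t -> r != reg p -> loc p r != Some (rho p).
Proof.
move=> pt r_neq; apply/eqP => /loc_cases [[j jp e]|[r_lt]].
  by move: (jp); rewrite {1}(rho_inj pt (ltn_trans jp pt) e) ltnn.
rewrite val_rho // /target; case: ifP => _ e.
  by move: r_neq; rewrite (val_inj e) eqxx.
by move: r_lt; rewrite -e ltnNge leq_addr.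
Qed.

Lemma loc_last p j R : j < p -> reg j = R ->
  (forall j', j < j' < p -> reg j' != R) -> loc p R = Some (rho j).
Proof.
elim: p => [//|p IH] jp reg_j later /=.
move: jp; rewrite ltnS leq_eqVlt => /orP [/eqP ej|jp].
  by rewrite -ej reg_j eqxx.
have p_neq : reg p != R by apply: later; rewrite jp ltnSn.
rewrite eq_sym (negbTE p_neq).
by apply: IH => // j' /andP [lt j'p]; apply: later; rewrite lt ltnW.
Qed.

Lemma loc_unwritten p R : (forall j, j < p -> reg j != R) -> loc p R = loc 0 R.
Proof.
elim: p => [//|p IH] unwritten /=.
rewrite eq_sym (negbTE (unwritten p _)) //.
by apply: IH => j jp; apply: unwritten; rewrite ltnW.
Qed.

Lemma exists_final_write (i : 'I_n) j : j < t -> reg j = lshift k i ->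
  exists jl, [/\ jl < t, final jl, reg jl = lshift k i
            & forall j', jl < j' < t -> reg j' != lshift k i].
Proof.
move=> jt reg_j.
have [|jl [jlt /eqP reg_jl later]] :=
  @exists_last_index (fun j => reg j == lshift k i) t.
  by exists j; rewrite ?reg_j.
exists jl; split => //; rewrite /final reg_jl /= ltn_ord.
by apply/forallP => j'; apply/implyP => lt; apply: later; rewrite lt ltn_ord.
Qed.

Lemma loc_output (i : 'I_n) : loc t (lshift k i) = Some (lshift k' i).
Proof.
have [/(has_nthP dflt) [j jt /eqP reg_j]|] :=
  boolP (has (fun p : instr q (n + k) => p.1 == lshift k i) ps).
  have [jl [jlt final_jl reg_jl later]] := exists_final_write jt reg_j.
  rewrite (loc_last jlt reg_jl later); congr Some; apply: val_inj.
  by rewrite val_rho // /target final_jl reg_jl.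
rewrite -all_predC => /(all_nthP dflt) unwritten.
by rewrite loc_unwritten /= ?split_lshift.
Qed.

Let env p y : vec q (n + k) :=
  [ffun r => if loc p r is Some c then y c else c0].

Let fnew : Fmap (n + k') q := fun y =>
  [ffun c => if [pick j : 'I_t | rho j == c] is Some j then fn j (env j y)
             else y c].

Let steps p := map rho (iota 0 p).

Let wnew := steps t ++ [seq c <- enum 'I_(n + k') | c \notin steps t].

Lemma fnew_rho (y : vec q (n + k')) p :
  p < t -> fnew y (rho p) = fn p (env p y).
Proof.
move=> pt; rewrite ffunE; case: pickP => [j /eqP e|/(_ (Ordinal pt))].
  by rewrite (rho_inj (ltn_ord j) pt e).
by rewrite eqxx.
Qed.

Lemma upd_fnew_out (y : vec q (n + k')) c :
  c \notin steps t -> upd fnew c y = y.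
Proof.
move=> c_out; apply/ffunP => c'; rewrite ffunE.
case: eqP => [->|_] //; rewrite ffunE; case: pickP => [j /eqP e|_] //.
by move: c_out; rewrite -e map_f // mem_iota /=.
Qed.

Lemma steps_rcons p : steps p.+1 = rcons (steps p) (rho p).
Proof. by rewrite /steps -addn1 iotaD map_cat cats1. Qed.

Lemma env_seqf (y : vec q (n + k')) p : p <= t ->
  env p (seqf fnew (steps p) y) = run (env 0 y) (take p ps).
Proof.
elim: p => [|p IH] pt; first by rewrite take0.
rewrite (take_nth dflt pt) run_rcons -IH; last exact: ltnW.
rewrite steps_rcons seqf_rcons.
apply/ffunP => r; rewrite /exec !ffunE /= -/(reg p).
case: ifP => [_|/negbT r_neq]; first by rewrite ffunE eqxx fnew_rho.
case loc_r: (loc p r) => [c|] //; rewrite ffunE.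
case: eqP => // c_eq; move: (loc_neq_rho pt r_neq).
by rewrite loc_r c_eq eqxx.
Qed.

Lemma wnew_perm : is_perm_word wnew.
Proof.
apply: uniq_perm; last 2 first.
- exact: enum_uniq.
- by move=> c; rewrite mem_enum mem_cat mem_filter mem_enum andbT orbN.
rewrite cat_uniq filter_uniq ?enum_uniq // andbT; apply/andP; split.
  rewrite map_inj_in_uniq ?iota_uniq // => a b; rewrite !mem_iota /=.
  exact: rho_inj.
by apply/hasPn => c; rewrite mem_filter => /andP [].
Qed.

Lemma pr_seqf_wnew (y : vec q (n + k')) :
  pr (seqf fnew wnew y) = pr (run (env 0 y) ps).
Proof.
have run_t := env_seqf y (leqnn t); rewrite take_size in run_t.
rewrite seqf_cat -run_t.
have : all (fun c => c \notin steps t)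
            [seq c <- enum 'I_(n + k') | c \notin steps t].
  by apply/allP => c; rewrite mem_filter => /andP [].
elim: [seq _ <- _ | _] (seqf fnew (steps t) y) => [|c s IH] z /=.
  by move=> _; apply/ffunP => i; rewrite !ffunE loc_output.
by case/andP => c_out /IH <-; rewrite upd_fnew_out.
Qed.

Lemma pr_env0 (y : vec q (n + k')) : pr (env 0 y) = pr y.
Proof. by apply/ffunP => i; rewrite !ffunE /= split_lshift. Qed.

Lemma count_final : count final (iota 0 t) + k' = t.
Proof. by rewrite /k' /fresh count_predC size_iota. Qed.

Variables (h : Fmap n q) (run_h : forall x, pr (run x ps) = h (pr x)).

Lemma sequentializes_fnew : sequentializes fnew wnew h.
Proof.
by split; [exact: wnew_perm | move=> y; rewrite pr_seqf_wnew run_h pr_env0].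
Qed.

Lemma Omega_le_final : Omega h <= count final (iota 0 t).
Proof.
rewrite -card_ord_count; pose out (j : 'I_t) : 'I_n := insubd i0 (reg j).
apply: leq_trans (leq_imset_card out _); apply: subset_leq_card.
apply/subsetP => i; rewrite inE => /(written_of_nontrivial run_h).
case/(has_nthP dflt) => j jt /eqP reg_j.
have [jl [jlt final_jl reg_jl _]] := exists_final_write jt reg_j.
apply/imsetP; exists (Ordinal jlt) => //.
by apply: val_inj; rewrite val_insubd /= reg_jl /= ltn_ord.
Qed.

Lemma sequentialization_of_run :
  exists k', seq_possible h k' /\ Omega h + k' <= size ps.
Proof.
exists k'; split; first by exists fnew, wnew; exact: sequentializes_fnew.
by rewrite -[size ps]count_final leq_add2r Omega_le_final.
Qed.

End Sequentialization.

Theorem mainTheorem9 (q n : nat) (h : Fmap n q) (k Lstar : nat) :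
  2 <= q -> 1 <= n ->
  is_kappa_min h k -> is_Lstar h Lstar ->
  Omega h + k <= Lstar.
Proof.
move=> q_ge2 n_ge1 [_ kappa_min] [[k0 [[gs [size_gs [single realize]]] _]] _].
have [ps [size_ps run_gs]] := compose_list_run single.
have run_h x : pr (run x ps) = h (pr x) by rewrite -run_gs.
have [k' [seq_k' le_size]] :=
  sequentialization_of_run (Ordinal (ltnW q_ge2)) (Ordinal n_ge1) run_h.
rewrite -size_gs -size_ps; apply: leq_trans le_size.
by rewrite leq_add2l kappa_min.
Qed.
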